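(* Let $\Gamma$ be a finitely generated residually finite infinite group, $\{\Gamma_n\}_{n\in\mathbb N}$ finite-index normal subgroups with $\bigcap_n\bigcup_{i\ge n}\Gamma_i=\{e\}$, $f\in\mathbb{Z}\Gamma$ well-balanced and $g\in\mathbb{Z}\Gamma$. Then $\pi_n(g)\in\mathbb{Z}(\Gamma/\Gamma_n)\pi_n(f)$ for all $n\in\mathbb{N}$ if and only if $g\in\mathbb{Z}\Gamma f$.
   Context: $f\in\mathbb{Z}\Gamma$ is well-balanced if $\sum_sf_s=0$, $f_s\le0$ for $s\ne e$, $f_s=f_{s^{-1}}$, and the support of $f$ generates $\Gamma$. $\pi_n:\mathbb{Z}\Gamma\to\mathbb{Z}(\Gamma/\Gamma_n)$ is the ring homomorphism induced by the quotient map; multiplication in group rings is convolution $(gh)_w=\sum_sg_sh_{s^{-1}w}$. *)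

From HB Require Import structures.
From mathcomp Require Import all_boot all_order all_algebra all_fingroup.
Set Implicit Arguments. Unset Strict Implicit. Unset Printing Implicit Defensive.
Import GRing.Theory Num.Theory.

(* An element of Z[G] is represented by a formal finite sum
   sum_k c_k * g_k, given as a list of pairs (g_k, c_k).  Two such lists
   represent the same element iff they have the same coefficients. *)
Definition grpring (G : groupType) := seq (G * int)%type.

Definition coef (G : groupType) (f : grpring G) (w : G) : int :=
  (\sum_(p <- f | p.1 == w) p.2)%R.

Definition grmul (G : groupType) (g h : grpring G) : grpring G :=
  [seq ((p.1 * q.1)%g, (p.2 * q.2)%R) | p <- g, q <- h].

Definition in_left_ideal (G : groupType) (g f : grpring G) : Prop :=
  exists h : grpring G, forall w, coef g w = coef (grmul h f) w.

Definition prodl (G : groupType) (l : seq G) : G := foldr (fun x y => (x * y)%g) 1%g l.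

Definition generates (G : groupType) (P : pred G) : Prop :=
  forall x : G, exists l : seq G, all (fun y => P y || P (y^-1)%g) l /\ x = prodl l.

Definition finitely_generated (G : groupType) : Prop :=
  exists S : seq G, generates (fun y => y \in S).

Definition infinite_group (G : groupType) : Prop :=
  ~ exists s : seq G, forall x : G, x \in s.

Definition group_hom (G H : groupType) (phi : G -> H) : Prop :=
  forall x y : G, phi (x * y)%g = (phi x * phi y)%g.

Definition residually_finite (G : groupType) : Prop :=
  forall x : G, x != 1%g ->
    exists (Q : finGroupType) (phi : G -> Q), group_hom phi /\ phi x != 1%g.

Definition support (G : groupType) (f : grpring G) : seq G :=
  [seq s <- undup (map fst f) | coef f s != 0%R].

Definition well_balanced (G : groupType) (f : grpring G) : Prop :=
  [/\ (\sum_(s <- undup (map fst f)) coef f s)%R = 0%R,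
      (forall s : G, s != 1%g -> (coef f s <= 0)%R),
      (forall s : G, coef f s = coef f (s^-1)%g) &
      generates (fun s => coef f s != 0%R)].

(* The finite quotient Gamma/Gamma_n is given as a finite group Q together with a
   surjective homomorphism phi : Gamma -> Q whose kernel is Gamma_n. *)
Definition kernel (G : groupType) (Q : finGroupType) (phi : G -> Q) : pred G :=
  fun x => phi x == 1%g.

(* group ring Z[Q] of a finite group: functions Q -> int, with convolution *)
Definition fgrmul (Q : finGroupType) (u v : {ffun Q -> int}) : {ffun Q -> int} :=
  [ffun w => (\sum_(s : Q) u s * v ((s^-1) * w)%g)%R].

Definition pi_hom (G : groupType) (Q : finGroupType) (phi : G -> Q) (f : grpring G)
  : {ffun Q -> int} :=
  [ffun q => (\sum_(p <- f | phi p.1 == q) p.2)%R].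

From Pilot Require Import Defs.
From HB Require Import structures.
From mathcomp Require Import all_boot all_order all_algebra all_fingroup.
From mathcomp Require Import zify.
From Stdlib Require Import Classical.

(* Only the converse needs an argument.  Write F = pi_n(f).  As f is
   well-balanced, right convolution by F is a graph Laplacian on the finite
   group Q = Gamma/Gamma_n: (u * F)(w) = sum_t (-F t) (u w - u (w t)), with
   nonnegative weights -F t, positive exactly along the image T_Q of the
   support T of f, which generates Q.  Let g be supported in the word ball of
   radius D and have l1-norm M, and let u * F = pi_n(g).  A discrete maximum
   principle (counting the flow of u out of its superlevel sets) shows that u
   is constant, say equal to c, outside the ball of radius L = 2 (D + 2 D M) of
   Q; crucially L does not depend on n.  Choosing n so large that pi_n kills no
   nontrivial element of a ball of radius 2 L + D + 2 in Gamma, the function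
   u - c on the ball of radius L, pulled back to Gamma, gives h with g = h f.
   The generation of Gamma comes from the support of f. *)

Set Implicit Arguments. Unset Strict Implicit. Unset Printing Implicit Defensive.
Import Order.TTheory GRing.Theory Num.Theory.
Local Open Scope ring_scope.

Lemma big_pick (I : eqType) (r : seq I) (a : I) (F : I -> int) :
  uniq r -> \sum_(i <- r | i == a) F i = if a \in r then F a else 0.
Proof.
move=> ur; case: ifPn => ar; first by rewrite -big_filter (filter_pred1_uniq ur ar) big_seq1.
by rewrite big1_seq // => i /andP[/eqP-> ai]; rewrite ai in ar.
Qed.

Section GroupRing.
Variable G : groupType.
Implicit Types (f g h : grpring G) (w y : G).

Lemma coef_mem f y : coef f y != 0 -> y \in map fst f.
Proof.
apply: contraR => yf; rewrite /coef big1_seq // => p /andP[/eqP py pf].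
by case/negP: yf; rewrite -py map_f.
Qed.

Lemma mem_support f y : (y \in Defs.support f) = (coef f y != 0).
Proof.
rewrite mem_filter mem_undup; case: (coef f y =P 0) => //= /eqP.
exact: coef_mem.
Qed.

Lemma uniq_support f : uniq (Defs.support f).
Proof. by rewrite filter_uniq ?undup_uniq. Qed.

Lemma regroup f (Y : seq G) (H : G -> int) :
  uniq Y -> {subset map fst f <= Y} ->
  \sum_(e <- f) e.2 * H e.1 = \sum_(y <- Y) coef f y * H y.
Proof.
move=> uY sY; rewrite /coef.
under [RHS]eq_bigr => y _ do rewrite big_distrl /= big_mkcond /=.
rewrite exchange_big /=; apply: eq_big_seq => e ef; rewrite -big_mkcond /=.
under eq_bigl => y do rewrite eq_sym.
by rewrite big_pick // sY // map_f.
Qed.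

Lemma regroup_support f (H : G -> int) :
  \sum_(e <- f) e.2 * H e.1 = \sum_(y <- Defs.support f) coef f y * H y.
Proof.
rewrite (@regroup f (undup (map fst f))) ?undup_uniq //; last by move=> y; rewrite mem_undup.
rewrite big_filter [RHS]big_mkcond /=; apply: eq_bigr => y _.
by case: (coef f y =P 0) => [->|]; rewrite ?mul0r.
Qed.

Lemma coef_grmul h f w : coef (grmul h f) w =
  \sum_(a <- h) \sum_(b <- f) (if (a.1 * b.1)%g == w then a.2 * b.2 else 0).
Proof. by rewrite /coef /grmul big_mkcond big_allpairs_dep. Qed.

End GroupRing.

Section Balls.
Variables (G : groupType) (T : seq G).

Fixpoint ball (k : nat) : seq G :=
  if k is k'.+1 then ball k' ++ [seq (x * t)%g | x <- ball k', t <- T] else [:: 1%g].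

Lemma ball0 x : (x \in ball 0) = (x == 1%g).
Proof. by rewrite inE. Qed.

Lemma ball_le k k' x : (k <= k')%N -> x \in ball k -> x \in ball k'.
Proof.
move=> /subnKC <-; elim: (k' - k)%N => [|d IH]; first by rewrite addn0.
by move=> xk; rewrite addnS /= mem_cat IH.
Qed.

Lemma ball_step k x t : x \in ball k -> t \in T -> (x * t)%g \in ball k.+1.
Proof.
by move=> xk tT; rewrite /= mem_cat; apply/orP; right; apply/allpairsP; exists (x, t).
Qed.

Lemma ball_elim k x : x \in ball k.+1 ->
  x \in ball k \/ exists2 t, t \in T & (x * t^-1)%g \in ball k.
Proof.
rewrite /= mem_cat => /orP[->|/allpairsP[[a b] [/= ak bT ->]]]; first by left.
by right; exists b; rewrite ?mulgK.
Qed.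

Lemma ball_mul i j x y : x \in ball i -> y \in ball j -> (x * y)%g \in ball (i + j).
Proof.
move=> xi; elim: j y => [|j IH] y; first by rewrite ball0 => /eqP ->; rewrite mulg1 addn0.
case/ball_elim => [yj|[t tT yt]]; first by apply: ball_le (IH _ yj); rewrite addnS.
by rewrite -(mulgVK t y) mulgA addnS; apply: ball_step => //; apply: IH.
Qed.

Lemma ball1 t : t \in T -> t \in ball 1.
Proof. by move=> tT; rewrite -[t]mul1g; apply: ball_step; rewrite ?ball0. Qed.

Lemma ball_exhaust (P : pred G) : generates P ->
  (forall y, P y || P (y^-1)%g -> y \in T) -> forall x, exists k, x \in ball k.
Proof.
move=> gen PT x; have [l [al ->]] := gen x.
elim: l al => [|a l IH] /=; first by exists 0%N; rewrite ball0.
case/andP=> aP /IH [k lk]; exists (1 + k)%N.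
by apply: ball_mul lk; apply/ball1/PT.
Qed.

Lemma ball_bound (A : eqType) (l : seq A) (pt : A -> G) :
  (forall x, exists k, x \in ball k) -> exists D, forall e, e \in l -> pt e \in ball D.
Proof.
move=> ex; elim: l => [|e l [D HD]]; first by exists 0%N.
have [k hk] := ex (pt e); exists (maxn k D) => e'; rewrite inE => /orP[/eqP ->|el].
  exact: ball_le (leq_maxl k D) hk.
exact: ball_le (leq_maxr k D) (HD _ el).
Qed.

Hypothesis T_sym : forall t, t \in T -> (t^-1)%g \in T.

Lemma ball_inv k x : x \in ball k -> (x^-1)%g \in ball k.
Proof.
elim: k x => [|k IH] x; first by rewrite !ball0 => /eqP ->; rewrite invg1.
case/ball_elim => [xk|[t tT xt]]; first by apply: ball_le (IH _ xk).
have -> : (x^-1 = t^-1 * (x * t^-1)^-1)%g by rewrite invgM invgK mulgA mulVg mul1g.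
by rewrite -add1n; apply: ball_mul; [apply/ball1/T_sym|apply: IH].
Qed.

End Balls.

Section Morphism.
Variables (G : groupType) (Q : finGroupType) (phi : G -> Q).
Hypothesis phiM : group_hom phi.

Lemma phi1 : phi 1%g = 1%g.
Proof. by apply: (mulgI (phi 1%g)); rewrite -phiM !mulg1. Qed.

Lemma phiV x : phi (x^-1)%g = ((phi x)^-1)%g.
Proof. by apply/esym/mulg1_eq; rewrite -phiM mulgV phi1. Qed.

Lemma ball_morph (T : seq G) k : ball (map phi T) k = map phi (ball T k).
Proof.
elim: k => [|k IH] /=; first by rewrite phi1.
rewrite IH map_cat map_allpairs allpairs_mapl allpairs_mapr; congr (_ ++ _).
by apply: eq_allpairs => x y; rewrite phiM.
Qed.

Lemma ball_inj (T : seq G) (R i j : nat) (a b : G) :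
  (forall t, t \in T -> (t^-1)%g \in T) ->
  (forall x, x \in ball T R -> phi x = 1%g -> x = 1%g) ->
  a \in ball T i -> b \in ball T j -> (i + j <= R)%N -> phi a = phi b -> a = b.
Proof.
move=> Tsym inj ai bj ijR ab.
suff /eqP : (a^-1 * b)%g = 1%g by rewrite mulg_eq1 eqg_inv => /eqP.
apply: inj; first exact: ball_le ijR (ball_mul (ball_inv Tsym ai) bj).
by rewrite phiM phiV ab mulVg.
Qed.

Implicit Types (f g h : grpring G).

Lemma pi_coef f q :
  pi_hom phi f q = \sum_(y <- Defs.support f | phi y == q) coef f y.
Proof.
rewrite /pi_hom ffunE big_mkcond /=.
transitivity (\sum_(e <- f) e.2 * (phi e.1 == q)%:R).
  by apply: eq_bigr => e _; case: eqP; rewrite ?mulr1 ?mulr0.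
rewrite (regroup_support f (fun y => (phi y == q)%:R)) [RHS]big_mkcond.
apply: eq_bigr => y _.
by case: eqP; rewrite ?mulr1 ?mulr0.
Qed.

Lemma pi_coef_eq g1 g2 : (forall w, coef g1 w = coef g2 w) ->
  pi_hom phi g1 = pi_hom phi g2.
Proof.
move=> hc; apply/ffunP => q; rewrite /pi_hom !ffunE.
set Y := undup (map fst g1 ++ map fst g2).
have regroupY g0 : {subset map fst g0 <= Y} ->
    \sum_(e <- g0 | phi e.1 == q) e.2 = \sum_(y <- Y) coef g0 y * (phi y == q)%:R.
  move=> sub; rewrite -regroup ?undup_uniq // big_mkcond; apply: eq_bigr => e _.
  by case: ifP; rewrite ?mulr1 ?mulr0.
rewrite !regroupY => [|y yg|y yg]; rewrite ?mem_undup ?mem_cat ?yg ?orbT //.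
by apply: eq_bigr => y _; rewrite hc.
Qed.

Lemma pi_grmul h g : pi_hom phi (grmul h g) = fgrmul (pi_hom phi h) (pi_hom phi g).
Proof.
apply/ffunP => q.
have -> : fgrmul (pi_hom phi h) (pi_hom phi g) q =
    \sum_s \sum_(a <- h) \sum_(b <- g)
       (if (phi a.1 == s) && (phi b.1 == (s^-1 * q)%g) then a.2 * b.2 else 0).
  rewrite /fgrmul ffunE; apply: eq_bigr => s _; rewrite /pi_hom !ffunE big_distrl /=.
  rewrite big_mkcond.
  apply: eq_bigr => a _; case: (phi a.1 == s) => /=; last by rewrite big1.
  rewrite big_distrr big_mkcond /=; apply: eq_bigr => b _.
  by case: ifP; rewrite ?mulr0.
rewrite exchange_big /pi_hom ffunE big_mkcond /grmul big_allpairs_dep /=.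
apply: eq_bigr => a _; rewrite exchange_big /=; apply: eq_bigr => b _.
rewrite -big_mkcond /= phiM.
have eq_div s : (phi b.1 == (s^-1 * q)%g) = ((s * phi b.1)%g == q).
  by apply/eqP/eqP => [->|<-]; rewrite ?mulVKg ?mulKg.
case: (boolP ((phi a.1 * phi b.1)%g == q)) => hq.
  rewrite (big_pred1 (phi a.1)) // => s /=.
  by apply/andP/eqP => [[/eqP <- //]|->]; rewrite eq_div.
by rewrite big_pred0 // => s; apply/andP => [[/eqP <-]]; rewrite eq_div (negPf hq).
Qed.

Lemma pi_l1 g : \sum_q `|pi_hom phi g q| <= (\sum_(e <- g) absz e.2)%N%:Z.
Proof.
have -> : (\sum_(e <- g) absz e.2)%N%:Z = \sum_(e <- g) `|e.2|.
  by elim: g => [|e g IH]; rewrite ?big_nil ?big_cons // PoszD IH abszE.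
apply: (@le_trans _ _ (\sum_q \sum_(e <- g | phi e.1 == q) `|e.2|)).
  by apply: ler_sum => q _; rewrite /pi_hom ffunE; exact: ler_norm_sum.
under eq_bigr => q _ do rewrite big_mkcond /=.
rewrite exchange_big /=; apply: ler_sum => e _; rewrite -big_mkcond /=.
by under eq_bigl => q do rewrite eq_sym; rewrite big_pred1_eq.
Qed.

End Morphism.

Lemma exists_argmax (I : finType) (i0 : I) (h : I -> int) :
  exists x, forall y, h y <= h x.
Proof. by case: (@arg_maxP _ _ I i0 xpredT h isT) => x _ hx; exists x => y; exact: hx. Qed.

Section Laplacian.
Variable Q : finGroupType.
Variable F : {ffun Q -> int}.
Hypothesis F_offdiag : forall t, t != 1%g -> F t <= 0.
Hypothesis F_sym : forall t, F t = F (t^-1)%g.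
Hypothesis F_sum : \sum_t F t = 0.

Definition lapl (u : Q -> int) (w : Q) : int := \sum_t - F t * (u w - u (w * t)%g).

(* Right convolution by F is the Laplacian, as F has total mass zero. *)
Lemma fgrmul_lapl (u : {ffun Q -> int}) w : fgrmul u F w = lapl u w.
Proof.
rewrite /fgrmul ffunE (reindex_inj (mulgI w)) /=.
under eq_bigr => t _ do rewrite invgM mulgVK -F_sym.
under [RHS]eq_bigr => t _ do rewrite mulrBr !mulNr opprK addrC.
rewrite sumrB -mulr_suml F_sum mul0r subr0; apply: eq_bigr => t _.
by rewrite mulrC.
Qed.

Lemma laplN (u : Q -> int) w : lapl (fun x => - u x) w = - lapl u w.
Proof. by rewrite /lapl -sumrN; apply: eq_bigr => t _; rewrite -opprD mulrN. Qed.

(* The net flow of u inside a set A vanishes, by symmetry of the weights. *)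
Lemma inner_flow_eq0 (u : Q -> int) (A : {set Q}) :
  \sum_(w in A) \sum_(t | (w * t)%g \in A) - F t * (u w - u (w * t)%g) = 0.
Proof.
set X := LHS; suff : X = - X by lia.
pose sw (pr : Q * Q) := ((pr.1 * pr.2)%g, (pr.2^-1)%g).
have swK : involutive sw by case=> a b; rewrite /sw /= mulgK invgK.
rewrite {1}/X pair_big_dep /= (reindex_inj (inv_inj swK)) /= /X pair_big_dep -sumrN.
apply: eq_big => [[a b]|[a b] _] /=; first by rewrite mulgK andbC.
by rewrite mulgK -F_sym -mulrN opprB.
Qed.

Variable TQ : seq Q.
Hypothesis TQ_neg : forall t, t \in TQ -> t != 1%g -> F t < 0.
Hypothesis TQ_sym : forall t, t \in TQ -> (t^-1)%g \in TQ.
Hypothesis TQ_supp : forall t, F t != 0 -> t \in TQ.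
Hypothesis TQ_gen : forall x, exists k, x \in ball TQ k.

Section Harmonic.
Variables (u p : Q -> int).
Hypothesis u_sol : forall w, p w = lapl u w.

Lemma outflow (A : {set Q}) : \sum_(w in A) p w =
  \sum_(w in A) \sum_t (if (w * t)%g \in A then 0 else - F t * (u w - u (w * t)%g)).
Proof.
transitivity (\sum_(w in A) (\sum_(t | (w * t)%g \in A) - F t * (u w - u (w * t)%g)
   + \sum_t (if (w * t)%g \in A then 0 else - F t * (u w - u (w * t)%g)))).
  apply: eq_bigr => w _; rewrite u_sol /lapl (bigID (fun t => (w * t)%g \in A)) /=.
  congr (_ + _); rewrite [LHS]big_mkcond /=; apply: eq_bigr => t _.
  by case: ((w * t)%g \in A).
by rewrite big_split /= inner_flow_eq0 add0r.
Qed.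

(* A point where p vanishes and no neighbour lies higher has all its
   neighbours at the same height: the terms of lapl u x are then nonnegative. *)
Lemma flat_at x : p x = 0 -> (forall t, F t < 0 -> u (x * t)%g <= u x) ->
  forall t, F t < 0 -> u (x * t)%g = u x.
Proof.
move=> px below t Ft.
have nn s : true -> 0 <= - F s * (u x - u (x * s)%g).
  move=> _; case: (s =P 1%g) => [->|/eqP s1]; first by rewrite mulg1 subrr mulr0.
  have := F_offdiag s1; rewrite le_eqVlt => /orP[/eqP->|Fs]; first by rewrite oppr0 mul0r.
  by apply: mulr_ge0; [rewrite oppr_ge0 ltW|rewrite subr_ge0 below].
have := psumr_eq0P nn; rewrite -/(lapl u x) -u_sol px => /(_ erefl t isT).
move/eqP; rewrite mulf_eq0 oppr_eq0 (lt_eqF Ft) /= subr_eq0 => /eqP; lia.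
Qed.

Lemma max_on_support xM : (forall y, u y <= u xM) ->
  (exists2 s, p s != 0 & u s = u xM) \/ (forall y, u y = u xM).
Proof.
move=> umax.
case: (boolP [exists s, (p s != 0) && (u s == u xM)]) =>
   [/existsP[s /andP[ps /eqP us]]|nex]; first by left; exists s.
right.
have spread y t : u y = u xM -> t \in TQ -> u (y * t)%g = u xM.
  move=> uy tT; case: (t =P 1%g) => [->|/eqP t1]; first by rewrite mulg1.
  have py : p y = 0.
    by apply/eqP; apply: contraNT nex => py; apply/existsP; exists y; rewrite py uy eqxx.
  have below s : F s < 0 -> u (y * s)%g <= u y by rewrite uy => _; exact: umax.
  by rewrite (flat_at py below (TQ_neg tT t1)).
have ball_max k z : z \in ball TQ k -> u (xM * z)%g = u xM.
  elim: k z => [|k IH] z; first by rewrite ball0 => /eqP ->; rewrite mulg1.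
  case/ball_elim => [/IH //|[t tT zt]].
  by rewrite -(mulgVK t z) mulgA; apply: spread tT; exact: IH.
move=> y; have [k hk] := TQ_gen (xM^-1 * y)%g.
by have := ball_max _ _ hk; rewrite mulKVg.
Qed.

Lemma uphill x t : p x = 0 -> F t < 0 -> u (x * t)%g < u x ->
  exists2 s, F s < 0 & u x < u (x * s)%g.
Proof.
move=> px Ft lt.
case: (boolP [exists s, (F s < 0) && (u x < u (x * s)%g)]) =>
   [/existsP[s /andP[a b]]|nex]; first by exists s.
have below s : F s < 0 -> u (x * s)%g <= u x.
  move=> Fs; rewrite leNgt; apply: contraNN nex => h.
  by apply/existsP; exists s; rewrite Fs h.
by move: lt; rewrite (flat_at px below Ft) ltxx.
Qed.

Variable D : nat.
Hypothesis p_supp : forall q, p q != 0 -> q \in ball TQ D.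

(* If u exceeds u x by at most m anywhere and x has a lower neighbour, then an
   increasing path of length at most m from x reaches the support of p. *)
Lemma climb m x : (forall y, u y <= u x + m%:Z) ->
  (exists2 t, F t < 0 & u (x * t)%g < u x) -> x \in ball TQ (D + m).
Proof.
elim: m x => [|m IH] x hb [t Ft lt];
  (case: (p x =P 0) => [px|/eqP px]; last exact: ball_le (leq_addr _ _) (p_supp px));
  have [s Fs gt] := uphill px Ft lt.
  by have := hb (x * s)%g; rewrite addr0 => h; move: gt; rewrite ltNge h.
have xs : (x * s)%g \in ball TQ (D + m).
  apply: IH; first by move=> y; have := hb y; lia.
  by exists (s^-1)%g; rewrite ?mulgK // -F_sym.
have sT : (s^-1)%g \in TQ by apply/TQ_supp; rewrite -F_sym lt_eqF.
by rewrite addnS -(mulgK s x); apply: ball_step.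
Qed.

Variable M : nat.
Hypothesis p_l1 : \sum_q `|p q| <= M%:Z.

(* The edge leaves the
   superlevel set of u at x, whose outflow is at most the mass of p; the
   weight of the edge is a nonzero integer, hence at least 1. *)
Lemma drop_le x t : F t < 0 -> u x - u (x * t)%g <= M%:Z.
Proof.
move=> Ft; case: (leP (u x) (u (x * t)%g)) => [|ux]; first by lia.
set A := [set y | u x <= u y].
have xA : x \in A by rewrite inE.
have xtA : (x * t)%g \notin A by rewrite inE -ltNge.
have massA : \sum_(w in A) p w <= M%:Z.
  apply: le_trans p_l1; apply: (@le_trans _ _ (\sum_(w in A) `|p w|)).
    by apply: ler_sum => w _; exact: ler_norm.
  by rewrite [X in _ <= X](bigID (mem A)) /= lerDl; exact: sumr_ge0.
have out_ge0 w : w \in A -> forall s,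
    0 <= (if (w * s)%g \in A then 0 else - F s * (u w - u (w * s)%g)).
  move=> wA s; case: ifPn => // wsA.
  have s1 : s != 1%g by apply: contraNneq wsA => ->; rewrite mulg1.
  apply: mulr_ge0; first by rewrite oppr_ge0 F_offdiag.
  by move: wA wsA; rewrite !inE -ltNge subr_ge0 => a /ltW b; exact: le_trans b a.
apply: le_trans massA; rewrite outflow (bigD1 x) //= (bigD1 t) //= (negPf xtA).
have R1 : 0 <= \sum_(s | s != t) (if (x * s)%g \in A then 0 else - F s * (u x - u (x * s)%g)).
  by apply: sumr_ge0 => s _; exact: out_ge0.
have R2 : 0 <= \sum_(w in A | w != x) \sum_s
    (if (w * s)%g \in A then 0 else - F s * (u w - u (w * s)%g)).
  by apply: sumr_ge0 => w /andP[wA _]; apply: sumr_ge0 => s _; exact: out_ge0.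
have : 0 <= (- F t - 1) * (u x - u (x * t)%g) by apply: mulr_ge0; lia.
rewrite -addrA mulrBl mul1r subr_ge0 => h; apply: le_trans h _.
by rewrite lerDl; exact: addr_ge0.
Qed.

Lemma path_drop_le k z x : z \in ball TQ k -> u x - u (x * z)%g <= k%:Z * M%:Z.
Proof.
elim: k z x => [|k IH] z x; first by rewrite ball0 => /eqP ->; rewrite mulg1 subrr mul0r.
case/ball_elim => [zk|[t tT zt]]; rewrite -addn1 PoszD mulrDl mul1r.
  by have := IH _ x zk; lia.
have := IH _ x zt; case: (t =P 1%g) => [->|/eqP t1].
  by rewrite invg1 mulg1; lia.
have := drop_le (x * (z * t^-1))%g (TQ_neg tT t1).
rewrite -mulgA mulgVK => last_step first_steps.
by rewrite -(subrKA (u (x * (z * t^-1))%g)); exact: lerD.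
Qed.

End Harmonic.

(* The radius beyond which solutions are flat: D + 2 D M. *)
Definition flat_radius (D M : nat) : nat := (D + (D + D) * M)%N.

Section FarField.
Variables (u p : Q -> int) (M D : nat).
Hypothesis u_sol : forall w, p w = lapl u w.
Hypothesis p_l1 : \sum_q `|p q| <= M%:Z.
Hypothesis p_supp : forall q, p q != 0 -> q \in ball TQ D.

(* -u solves the equation for -p, so the maximum principle also governs minima. *)
Let u_solN w : - p w = lapl (fun z => - u z) w.
Proof. by rewrite laplN u_sol. Qed.

Let p_suppN q : - p q != 0 -> q \in ball TQ D.
Proof. by rewrite oppr_eq0; exact: p_supp. Qed.

Lemma oscillation x y : u x - u y <= ((D + D) * M)%N%:Z.
Proof.
have [xM hM] := exists_argmax 1%g u.
have [xm hm] := exists_argmax 1%g (fun z => - u z).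
case: (max_on_support u_sol hM) => [[s1 ps1 us1]|cstM]; last by rewrite !cstM subrr.
case: (max_on_support u_solN hm) => [[s2 ps2 us2]|cstm].
  have s12 := ball_mul (ball_inv TQ_sym (p_supp ps1)) (p_suppN ps2).
  have := path_drop_le u_sol p_l1 s1 s12.
  by rewrite mulKVg PoszM; have := hM x; have := hm y; lia.
by have := cstm x; have := cstm y; lia.
Qed.

Lemma flat_outside x t :
  x \notin ball TQ (flat_radius D M) -> t \in TQ -> u (x * t)%g = u x.
Proof.
move=> xfar tT; case: (t =P 1%g) => [->|/eqP t1]; first by rewrite mulg1.
have Ft := TQ_neg tT t1; apply/eqP; apply: contraNT xfar => ne.
case: (ltrgtP (u (x * t)%g) (u x)) => h.
- by apply: (climb u_sol p_supp) => [y|]; [have := oscillation y x; lia|exists t].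
- apply: (climb u_solN p_suppN) => [y|]; first by have := oscillation x y; lia.
  by exists t; rewrite // ltrN2.
- by rewrite h eqxx in ne.
Qed.

(* Take w of maximal word length E; for y far from 1, follow a geodesic from
   w^-1 to y: all its points stay outside the flat radius, so u is constant
   along it. *)
Lemma constant_outside :
  exists c, forall y, u y != c -> y \in ball TQ (2 * flat_radius D M).
Proof.
set r := flat_radius D M.
pose len y := ex_minn (TQ_gen y).
have lenP y : y \in ball TQ (len y) /\ forall k, y \in ball TQ k -> (len y <= k)%N.
  by rewrite /len; case: ex_minnP.
have [w wmax] := exists_argmax 1%g (fun x => (len x)%:Z).
set E := len w.
have in_ballE x : x \in ball TQ E by apply: ball_le (proj1 (lenP x)); rewrite -lez_nat.
have geodesic k z : z \in ball TQ k ->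
    (forall j, (w^-1 * z)%g \in ball TQ j -> (2 * r + 1 + k <= j + E)%N) ->
    u (w^-1 * z)%g = u (w^-1)%g.
  elim: k z => [|k IH] z; first by rewrite ball0 => /eqP ->; rewrite mulg1.
  move=> zk1 far; case/ball_elim: (zk1) => [zk|[t tT zt]].
    by apply: IH zk _ => j /far; lia.
  have wz_far : (w^-1 * z)%g \notin ball TQ r.
    apply/negP => wzr; have := far _ wzr.
    have : w \in ball TQ (k.+1 + r).
      have -> : w = (z * (w^-1 * z)^-1)%g by rewrite invgM invgK mulKVg.
      exact: ball_mul zk1 (ball_inv TQ_sym wzr).
    by move/(proj2 (lenP w)); lia.
  rewrite -(flat_outside wz_far (TQ_sym tT)) -mulgA; apply: IH zt _ => j hj.
  have : (w^-1 * z)%g \in ball TQ j.+1 by rewrite -(mulgVK t z) mulgA; apply: ball_step.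
  by move/far; lia.
exists (u (w^-1)%g) => y uy; apply/negPn/negP => yfar.
have leny : (2 * r + 1 <= len y)%N.
  by rewrite addn1 ltnNge; apply: contra yfar => le; exact: ball_le le (proj1 (lenP y)).
case/negP: uy; rewrite -(geodesic E (w * y)%g (in_ballE _)) ?mulKg //.
by move=> j /(proj2 (lenP y)); lia.
Qed.

End FarField.

End Laplacian.

Section WellBalanced.
Variables (G : groupType) (Q : finGroupType) (phi : G -> Q).
Hypothesis phiM : group_hom phi.
Variable f : grpring G.
Hypothesis f_wb : well_balanced f.
Local Notation T := (Defs.support f).
Local Notation F := (pi_hom phi f).

Lemma support_sym t : t \in T -> (t^-1)%g \in T.
Proof. by case: f_wb => _ _ fsym _; rewrite !mem_support -fsym. Qed.

Lemma support_exhaust x : exists k, x \in ball T k.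
Proof.
case: f_wb => _ _ fsym gen; apply: (ball_exhaust gen) => y.
by rewrite mem_support -fsym orbb.
Qed.

Lemma pi_offdiag t : t != 1%g -> F t <= 0.
Proof.
case: f_wb => _ fneg _ _ t1; rewrite pi_coef; apply: sumr_le0 => y /eqP yt.
by apply: fneg; apply: contraNneq t1 => y1; rewrite -yt y1 phi1.
Qed.

Lemma pi_sym t : F t = F (t^-1)%g.
Proof.
case: f_wb => _ _ fsym _; rewrite !pi_coef.
have Tinv : perm_eq T (map (fun y => y^-1)%g T).
  apply: uniq_perm; rewrite ?uniq_support ?(map_inj_uniq (@invg_inj _)) ?uniq_support //.
  move=> y; apply/idP/mapP => [yT|[z zT ->]]; last exact: support_sym.
  by exists (y^-1)%g; rewrite ?invgK // support_sym.
rewrite [RHS](perm_big _ Tinv) big_map; apply: eq_big => y; last by rewrite -fsym.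
by rewrite phiV // eqg_inv.
Qed.

Lemma pi_sum : \sum_t F t = 0.
Proof.
case: f_wb => fsum _ _ _.
under eq_bigr => t _ do rewrite pi_coef big_mkcond /=.
rewrite exchange_big /=; transitivity (\sum_(y <- T) coef f y).
  apply: eq_bigr => y _; rewrite -big_mkcond /=.
  by under eq_bigl => t do rewrite eq_sym; rewrite big_pred1_eq.
rewrite big_filter -[RHS]fsum [in RHS](bigID (fun s => coef f s != 0)) /=.
by rewrite [X in _ = _ + X]big1 ?addr0 // => s /negPn /eqP.
Qed.

(* Every nontrivial image of a support element is a strictly negative weight,
   since the coefficients of f off the identity are all nonpositive. *)
Lemma pi_neg t : t \in map phi T -> t != 1%g -> F t < 0.
Proof.
case: f_wb => _ fneg _ _ /mapP[y yT ->] py1.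
have y1 : y != 1%g by apply: contraNneq py1 => ->; rewrite phi1.
rewrite pi_coef big_mkcond (bigD1_seq y) ?uniq_support //= eqxx.
have cy : coef f y < 0 by rewrite lt_neqAle -mem_support yT fneg.
have rest : \sum_(i <- T | i != y) (if phi i == phi y then coef f i else 0) <= 0.
  apply: sumr_le0 => i _; case: eqP => // pi; apply: fneg.
  by apply: contraNneq py1 => i1; rewrite -pi i1 phi1.
by rewrite -[0](addr0 0); exact: ltr_leD.
Qed.

Lemma image_sym t : t \in map phi T -> (t^-1)%g \in map phi T.
Proof. by case/mapP=> y yT ->; rewrite -phiV //; apply/map_f/support_sym. Qed.

Lemma pi_supp t : F t != 0 -> t \in map phi T.
Proof.
apply: contraR => tT; rewrite pi_coef big1_seq // => y /andP[/eqP yt yT].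
by case/negP: tT; rewrite -yt map_f.
Qed.

(* Convolution by F, written on the support of f, up to a constant shift of u
   (F has total mass zero). *)
Lemma fgrmul_expand (u : {ffun Q -> int}) (c : int) q :
  fgrmul u F q = \sum_(y <- T) coef f y * (u (q * (phi y)^-1)%g - c).
Proof.
have shift : \sum_s c * F (s^-1 * q)%g = 0.
  have inj : injective (fun s : Q => (s^-1 * q)%g) by move=> a b /mulIg /invg_inj.
  rewrite -mulr_sumr; have -> : \sum_s F (s^-1 * q)%g = \sum_t F t.
    by rewrite [RHS](reindex_inj inj).
  by rewrite pi_sum mulr0.
rewrite /fgrmul ffunE; transitivity (\sum_s (u s - c) * F (s^-1 * q)%g).
  by rewrite [RHS](eq_bigr _ (fun s _ => mulrBl _ _ _)) sumrB shift subr0.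
under eq_bigr => s _ do rewrite pi_coef big_distrr /= big_mkcond /=.
rewrite exchange_big /=; apply: eq_bigr => y _; rewrite -big_mkcond /=.
have eq_s s : (phi y == (s^-1 * q)%g) = (s == (q * (phi y)^-1)%g).
  by apply/eqP/eqP => [->|->]; rewrite invgM invgK ?mulVKg ?mulgVK.
by under eq_bigl => s do rewrite eq_s; rewrite big_pred1_eq mulrC.
Qed.

Lemma solution_constant_outside (g : grpring G) (u : {ffun Q -> int}) (D : nat) :
  (forall q, exists x, phi x = q) ->
  (forall e, e \in g -> e.1 \in ball T D) ->
  pi_hom phi g = fgrmul u F ->
  exists c, forall q,
    q \notin ball (map phi T) (2 * flat_radius D (\sum_(e <- g) absz e.2)) -> u q = c.
Proof.
move=> phi_onto gD gu.
have u_sol w : pi_hom phi g w = lapl F u w.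
  by rewrite gu fgrmul_lapl //; [exact: pi_sym|exact: pi_sum].
have gen q : exists k, q \in ball (map phi T) k.
  have [x <-] := phi_onto q; have [k xk] := support_exhaust x.
  by exists k; rewrite ball_morph // map_f.
have g_supp q : pi_hom phi g q != 0 -> q \in ball (map phi T) D.
  rewrite /pi_hom ffunE; case: (boolP (has (fun e => phi e.1 == q) g)) => [|gq].
    by case/hasP=> e eg /eqP <- _; rewrite ball_morph // map_f ?gD.
  by rewrite big1_seq ?eqxx // => e /andP[eq eg]; case/negP: gq; apply/hasP; exists e.
have [c uc] := constant_outside pi_offdiag pi_sym pi_sum pi_neg image_sym pi_supp gen
  u_sol (pi_l1 phi g) g_supp.
by exists c => q; apply: contraNeq; exact: uc.
Qed.

End WellBalanced.

Section Lifting.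
Variables (G : groupType) (Q : finGroupType) (phi : G -> Q).
Hypothesis phiM : group_hom phi.
Variable f : grpring G.
Hypothesis f_wb : well_balanced f.
Local Notation T := (Defs.support f).

Lemma coef_lift (B : seq G) (v : G -> int) w :
  coef (grmul [seq (x, v x) | x <- undup B] f) w =
  \sum_(y <- T) coef f y * (if (w * y^-1)%g \in B then v (w * y^-1)%g else 0).
Proof.
rewrite coef_grmul big_map /=.
have eq_w x b : ((x * b)%g == w) = (x == (w * b^-1)%g).
  by apply/eqP/eqP => [<-|->]; rewrite ?mulgK ?mulgVK.
under eq_bigr => x _ do under eq_bigr => b _ do rewrite eq_w.
rewrite exchange_big /=.
rewrite -(regroup_support f (fun y => if (w * y^-1)%g \in B then v (w * y^-1)%g else 0)).
apply: eq_bigr => b _; rewrite -big_mkcond /= -mulr_suml big_pick ?undup_uniq //.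
rewrite mem_undup mulrC.
by case: ifP; rewrite ?mulr0.
Qed.

Variable R : nat.
Hypothesis phi_inj : forall x, x \in ball T R -> phi x = 1%g -> x = 1%g.

Lemma coef_pi (g : grpring G) (D j : nat) w :
  (forall e, e \in g -> e.1 \in ball T D) -> w \in ball T j -> (D + j <= R)%N ->
  coef g w = pi_hom phi g (phi w).
Proof.
move=> gD wj DjR; rewrite /pi_hom ffunE /coef [LHS]big_seq_cond [RHS]big_seq_cond.
apply: eq_bigl => e; case: (boolP (e \in g)) => eg //=.
apply/eqP/eqP => [-> //|pe].
by have := ball_inj phiM (support_sym f_wb) phi_inj (gD _ eg) wj DjR pe.
Qed.

End Lifting.

Lemma lift (G : groupType) (Q : finGroupType) (phi : G -> Q) (f g : grpring G)
  (u : {ffun Q -> int}) (c : int) (L D : nat) :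
  group_hom phi -> well_balanced f ->
  (forall x, x \in ball (Defs.support f) (L + L.+2 + D) -> phi x = 1%g -> x = 1%g) ->
  (forall e, e \in g -> e.1 \in ball (Defs.support f) D) -> (D <= L)%N ->
  (forall q, q \notin ball (map phi (Defs.support f)) L -> u q = c) ->
  pi_hom phi g = fgrmul u (pi_hom phi f) ->
  in_left_ideal g f.
Proof.
set T := Defs.support f => phiM f_wb phi_inj gD DL uc gu.
exists [seq (x, u (phi x) - c) | x <- undup (ball T L)] => w.
rewrite coef_lift; case: (boolP (w \in ball T L.+1)) => wL.
  rewrite (coef_pi phiM f_wb phi_inj gD wL); last by lia.
  rewrite gu (fgrmul_expand phi f_wb u c); apply: eq_big_seq => y yT.
  rewrite -phiV // -phiM; case: ifP => // far.
  rewrite uc ?subrr ?mulr0 // ball_morph //; apply/mapP => -[z zL zw].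
  have wy : (w * y^-1)%g \in ball T L.+2.
    by rewrite -addn1; apply: ball_mul wL (ball1 (support_sym f_wb yT)).
  have := ball_inj phiM (support_sym f_wb) phi_inj zL wy (leq_addr _ _) (esym zw).
  by move=> zwy; rewrite -zwy zL in far.
rewrite /coef big1_seq => [|e /andP[/eqP e1 eg]]; last first.
  by case/negP: wL; rewrite -e1; apply: ball_le (gD _ eg); lia.
rewrite big1_seq // => y /andP[_ yT]; case: ifP => [yL|]; last by rewrite mulr0.
case/negP: wL; rewrite -(mulgVK y w) -addn1; apply: ball_mul yL _.
exact: ball1.
Qed.

Lemma eventually_faithful (G : groupType) (Q : nat -> finGroupType)
  (phi : forall n, G -> Q n) (l : seq G) :
  (forall x, (forall n, exists2 i, (n <= i)%N & kernel (phi i) x) -> x = 1%g) ->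
  exists N, forall x, x \in l -> phi N x = 1%g -> x = 1%g.
Proof.
move=> sep; suff [N HN] : exists N, forall i, (N <= i)%N ->
    forall x, x \in l -> phi i x = 1%g -> x = 1%g by exists N; apply: HN.
elim: l => [|a l [N HN]]; first by exists 0%N.
case: (a =P 1%g) => [a1|/eqP a1].
  by exists N => i Ni x; rewrite inE => /orP[/eqP -> //|]; exact: HN.
have [n an] : exists n, ~ exists2 i, (n <= i)%N & kernel (phi i) a.
  by apply: not_all_ex_not => /sep a_triv; rewrite a_triv eqxx in a1.
exists (maxn N n) => i; rewrite geq_max => /andP[Ni ni] x.
rewrite inE => /orP[/eqP ->|xl] xi.
  by case: an; exists i; rewrite // /kernel xi.
exact: HN xl xi.
Qed.

Theorem lemma5p5 (Gamma : groupType)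
  (Q : nat -> finGroupType) (phi : forall n, Gamma -> Q n)
  (Hfg : finitely_generated Gamma)
  (Hrf : residually_finite Gamma)
  (Hinf : infinite_group Gamma)
  (Hhom : forall n, group_hom (phi n))
  (Hsurj : forall n (q : Q n), exists x : Gamma, phi n x = q)
  (Hint : forall x : Gamma,
     (forall n, exists2 i, (n <= i)%N & kernel (phi i) x) -> x = 1%g)
  (f g : grpring Gamma)
  (Hf : well_balanced f) :
  (forall n, exists u : {ffun Q n -> int},
      pi_hom (phi n) g = fgrmul u (pi_hom (phi n) f))
  <-> in_left_ideal g f.
Proof.
split=> [sol|[h gh] n]; last first.
  by exists (pi_hom (phi n) h); rewrite (pi_coef_eq (phi n) gh) pi_grmul.
set T := Defs.support f.
have [D gD] := ball_bound g fst (support_exhaust Hf).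
set L := (2 * flat_radius D (\sum_(e <- g) absz e.2))%N.
have [N phiN_inj] := eventually_faithful (ball T (L + L.+2 + D)) Hint.
have [u gu] := sol N.
have [c uc] := solution_constant_outside (Hhom N) Hf (Hsurj N) gD gu.
apply: (lift (Hhom N) Hf phiN_inj gD _ uc gu).
by rewrite /L /flat_radius; lia.
Qed.
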